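(* (a) Suppose $\hat\rho_{\rm loc}$ is a density matrix on $\mathcal H_{\rm loc}$ all of whose eigenvalues are nonzero. Then $\mathcal L(\hat\rho_{\rm loc}^{\otimes n})=0$ if and only if both of the following hold: (iii$'$) $\mathcal L_i(\hat\rho_{\rm loc})=0$ for all $i\in\Lambda$; (iv$'$) $[\hat H_{ij},(\hat\rho_{\rm loc})_i\otimes(\hat\rho_{\rm loc})_j]=0$ for all $(i,j)\in\Lambda_2$. (b) For an arbitrary density matrix $\hat\rho_{\rm loc}$ on $\mathcal H_{\rm loc}$ (not necessarily of full rank), if (iii$'$) and (iv$'$) both hold, then $\mathcal L(\hat\rho_{\rm loc}^{\otimes n})=0$.
   Context: Setting: a lattice of $n$ sites $\Lambda=\{1,\dots,n\}$, $\Lambda_2=\{(i,j):1\le i<j\le n\}$; each site carries a copy of a finite-dimensional Hilbert space $\mathcal H_{\rm loc}$ of dimension $d$, total space $\mathcal H=\mathcal H_{\rm loc}^{\otimes n}$; $X_i$ denotes a single-site operator $X$ acting on site $i$. Dynamics: GKSL equation $\frac{d\hat\rho}{dt}=\mathcal L(\hat\rho)=-i[\hat H,\hat\rho]+\sum_k\mathcal D_{\hat L_k}(\hat\rho)$, $\mathcal D_{\hat L}(\rho)=\hat L\rho\hat L^\dagger-\frac12\{\hat L^\dagger\hat L,\rho\}$. Every Lindblad operator acts on a single site; those on site $i$ are $\hat L_i^{(\alpha)}$, $\alpha\in\Gamma_i$. $\hat H$ is Hermitian and a sum of at most 2-site terms. With ${\rm Tr}_{\overline{ij}}$, ${\rm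 Tr}_{\overline i}$ the partial traces over all sites other than $i,j$, resp. other than $i$, define $\hat H_{ij}=\frac{{\rm Tr}_{\overline{ij}}[\hat H]}{d^{n-2}}-\frac{{\rm Tr}_{\overline i}[\hat H]}{d^{n-1}}-\frac{{\rm Tr}_{\overline j}[\hat H]}{d^{n-1}}+\frac{{\rm Tr}[\hat H]}{d^n}$ and $\hat H_i=\frac{{\rm Tr}_{\overline i}[\hat H]}{d^{n-1}}-\frac{{\rm Tr}[\hat H]}{d^n}$, so that $\hat H=\sum_{(i,j)\in\Lambda_2}\hat H_{ij}+\sum_i\hat H_i+d^{-n}{\rm Tr}[\hat H]$. The single-site superoperator is $\mathcal L_i(\bullet)=-i[\hat H_i,\bullet]+\sum_{\alpha\in\Gamma_i}\mathcal D_{\hat L_i^{(\alpha)}}(\bullet)$, so $\mathcal L=-i\sum_{(i,j)\in\Lambda_2}[\hat H_{ij},\cdot]+\sum_i\mathcal L_i$. *)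

(* Scalars: an arbitrary numClosedFieldType C (e.g. the
   complex numbers), with conjugation ^* and imaginary unit 'i. *)
From HB Require Import structures.
From mathcomp Require Import all_boot all_order all_algebra.
Set Implicit Arguments. Unset Strict Implicit. Unset Printing Implicit Defensive.
Import Order.TTheory GRing.Theory Num.Theory.
Local Open Scope ring_scope.

Section Defs.
Variable C : numClosedFieldType.

Definition adj m p (A : 'M[C]_(m, p)) : 'M[C]_(p, m) := (map_mx Num.conj A)^T.

Definition density d (rho : 'M[C]_d) : Prop :=
  adj rho = rho /\ (forall v : 'rV[C]_d, 0 <= (v *m rho *m adj v) 0 0)
  /\ \tr rho = 1.

Variables n d : nat.

(* basis configurations of H = H_loc^{(x) n}: one local basis index per site *)
Definition cfg := {ffun 'I_n -> 'I_d}.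
(* operators on the total space, indexed via enum_rank of configurations *)
Definition op := 'M[C]_#|{: cfg}|.
Definition ent (A : op) (s t : cfg) : C := A (enum_rank s) (enum_rank t).
Definition mkop (f : cfg -> cfg -> C) : op :=
  \matrix_(p, q) f (enum_val p) (enum_val q).

Definition agree_off (S : {set 'I_n}) (s t : cfg) : bool :=
  [forall k, (k \notin S) ==> (s k == t k)].
Definition agree_on (S : {set 'I_n}) (s t : cfg) : bool :=
  [forall k, (k \in S) ==> (s k == t k)].
Definition glue (S : {set 'I_n}) (x z : cfg) : cfg :=
  [ffun k => if k \in S then x k else z k].

(* A acts only on the sites of S, i.e. A = B_S (x) 1_{complement of S} *)
Definition supported_on (S : {set 'I_n}) (A : op) : Prop :=
  (forall s t, ~~ agree_off S s t -> ent A s t = 0) /\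
  (forall s t s' t', agree_on S s s' -> agree_on S t t' ->
     agree_off S s t -> agree_off S s' t' -> ent A s t = ent A s' t').

Definition two_local (H : op) : Prop :=
  exists ts : seq op, H = \sum_(A <- ts) A /\
    (forall A, A \in ts -> exists S : {set 'I_n}, #|S| <= 2 /\ supported_on S A)%N.

(* (Tr_{sites not in S} A / d^{n-|S|}) (x) 1_{sites not in S}, as an
   operator on the total space *)
Definition avg (S : {set 'I_n}) (A : op) : op :=
  mkop (fun s t => if agree_off S s t then
          (d%:R ^- #|~: S|) * \sum_(z : cfg | agree_on S z s) ent A z (glue S t z)
        else 0).

Definition Hpair (H : op) (i j : 'I_n) : op :=
  avg [set i; j] H - avg [set i] H - avg [set j] H + avg set0 H.

Definition upd (s : cfg) (i : 'I_n) (b : 'I_d) : cfg :=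
  [ffun k => if k == i then b else s k].

(* Tr_{\bar i}[A] / d^{n-1} as a d x d matrix on site i *)
Definition ptr1 (i : 'I_n) (A : op) : 'M[C]_d :=
  \matrix_(a, b) ((d%:R ^- n.-1) * \sum_(s : cfg | s i == a) ent A s (upd s i b)).

Definition Hsite (H : op) (i : 'I_n) : 'M[C]_d :=
  ptr1 i H - ((d%:R ^- n) * \tr H)%:M.

Definition embed1 (i : 'I_n) (X : 'M[C]_d) : op :=
  mkop (fun s t => if agree_off [set i] s t then X (s i) (t i) else 0).

Definition tpow (rho : 'M[C]_d) : op := mkop (fun s t => \prod_k rho (s k) (t k)).

Definition comm m (A B : 'M[C]_m) : 'M[C]_m := A *m B - B *m A.

Definition dissip m (L rho : 'M[C]_m) : 'M[C]_m :=
  L *m rho *m adj L - 2%:R^-1 *: (adj L *m L *m rho + rho *m (adj L *m L)).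

(* GKSL generator; Lops i = the Lindblad operators L_i^(alpha), alpha in Gamma_i *)
Definition Lind (H : op) (Lops : 'I_n -> seq 'M[C]_d) (rho : op) : op :=
  - ('i *: comm H rho) +
  \sum_(i < n) \sum_(L <- Lops i) dissip (embed1 i L) rho.

Definition Lsite (H : op) (Lops : 'I_n -> seq 'M[C]_d) (i : 'I_n)
  (rho : 'M[C]_d) : 'M[C]_d :=
  - ('i *: comm (Hsite H i) rho) + \sum_(L <- Lops i) dissip L rho.

End Defs.

(* Write E_S for the partial average avg S (normalised partial trace over the
   sites outside S, tensored back with the identity) and R for rho^{(x) n}.
   On product operators E_S keeps the factors on S and replaces the others by
   their normalised traces, so E_T E_S = E_{T cap S} and E_S A = A when A acts
   on S.  By linearity, a two-local H is therefore recovered as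
   sum_{i<j} H_ij + sum_i H_i + const, and since the H_i and the Lindblad
   operators act on single sites, L(R) is -i sum_{i<j} [H_ij, R] plus, for
   each i, the product state R with its i-th factor replaced by L_i(rho); this
   gives (b).  For (a), when rho is invertible, multiply L(R) = 0 on the
   right by R^{-1} and apply E_{a}: the pair terms drop out and what is left is
   L_a(rho) rho^{-1} + c = 0 for a scalar c, which vanishes because L_a(rho) is
   traceless.  Applying E_{a,b} then leaves H_ab = P H_ab P^{-1} with
   P = rho_a rho_b, i.e. [H_ab, P] = 0. *)
From HB Require Import structures.
From mathcomp Require Import all_boot all_order all_algebra.
From mathcomp Require Import ring zify.
Set Implicit Arguments. Unset Strict Implicit. Unset Printing Implicit Defensive.
Import Order.TTheory GRing.Theory Num.Theory.
Local Open Scope ring_scope.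

Section Pairs.
Variable n : nat.
Implicit Types (T : {set 'I_n}) (i j a b : 'I_n).

Lemma setI1_notin T i : i \notin T -> [set i] :&: T = set0.
Proof. by move=> iT; rewrite disjoint_setI0 // disjoints1. Qed.

Lemma card_le2P T : (#|T| <= 2)%N ->
  [\/ T = set0, exists a, T = [set a] | exists a b, (a < b)%N /\ T = [set a; b]].
Proof.
move=> T_le2; case: (ltngtP #|T| 1) => [T_lt1 | T_gt1 | /eqP/cards1P [a ->]].
- by apply: Or31; apply: cards0_eq; move: T_lt1; rewrite ltnS leqn0 => /eqP.
- have /cards2P [a [b [/negbTE ab ->]]] : #|T| == 2 by rewrite eqn_leq T_le2.
  apply: Or33; case: (ltngtP a b) => [lt_ab | lt_ba | /val_inj eq_ab].
  + by exists a, b.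
  + by exists b, a; rewrite setUC.
  + by rewrite eq_ab eqxx in ab.
- by apply: Or32; exists a.
Qed.

Lemma pair_not_subset1 a i j : (i < j)%N -> ~~ ([set i; j] \subset [set a]).
Proof.
move=> lt_ij; rewrite subUset !sub1set !in_set1.
by apply: contraL lt_ij => /andP [/eqP-> /eqP->]; rewrite ltnn.
Qed.

Lemma pair_subset_pair a b i j : (a < b)%N -> (i < j)%N ->
  [set i; j] \subset [set a; b] -> i = a /\ j = b.
Proof.
rewrite subUset !sub1set !inE => lt_ab lt_ij /andP [/orP [] /eqP eq_i /orP [] /eqP eq_j].
all: move: lt_ij; rewrite eq_i eq_j ?ltnn // => lt_ba.
by move: lt_ab lt_ba; lia.
Qed.

Lemma sum_pairs_single (V : zmodType) (F : 'I_n -> 'I_n -> V) a b : (a < b)%N ->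
  (forall i j, (i < j)%N -> ~~ ([set i; j] \subset [set a; b]) -> F i j = 0) ->
  \sum_(i : 'I_n) \sum_(j : 'I_n | (i < j)%N) F i j = F a b.
Proof.
move=> lt_ab F0; rewrite (bigD1 a) //= (bigD1 b) //= !big1 ?addr0 //.
- move=> i /negbTE neq_ia; apply: big1 => j lt_ij; apply: F0 => //.
  by apply: contraFN neq_ia => /(pair_subset_pair lt_ab lt_ij) [-> _]; rewrite eqxx.
- move=> j /andP [lt_aj /negbTE neq_jb]; apply: F0 => //.
  by apply: contraFN neq_jb => /(pair_subset_pair lt_ab lt_aj) [_ ->]; rewrite eqxx.
Qed.

End Pairs.

Section Matrices.
Variable C : numClosedFieldType.

Lemma comm_scalar m c (B : 'M[C]_m) : comm c%:M B = 0.
Proof. by rewrite /comm scalar_mxC subrr. Qed.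

Lemma commDl m (A1 A2 B : 'M[C]_m) : comm (A1 + A2) B = comm A1 B + comm A2 B.
Proof. by rewrite /comm mulmxDl mulmxDr opprD addrACA. Qed.

Lemma comm_suml m I (r : seq I) (P : pred I) (F : I -> 'M[C]_m) (B : 'M[C]_m) :
  comm (\sum_(i <- r | P i) F i) B = \sum_(i <- r | P i) comm (F i) B.
Proof. by rewrite /comm mulmx_suml mulmx_sumr -sumrB. Qed.

Lemma mxtrace_comm m (A B : 'M[C]_m) : \tr (comm A B) = 0.
Proof. by rewrite /comm raddfB /= mxtrace_mulC subrr. Qed.

Lemma mxtrace_dissip m (L X : 'M[C]_m) : \tr (dissip L X) = 0.
Proof.
rewrite /dissip raddfB /= mxtraceZ mxtraceD -mulmxA mxtrace_mulC mulmxA.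
rewrite [\tr (adj L *m L *m X)]mxtrace_mulC mulmxA -mulr2n.
by rewrite -[\tr _ *+ 2]mulr_natl mulKf ?subrr // pnatr_eq0.
Qed.

Lemma adj1 m : adj (1%:M : 'M[C]_m) = 1%:M.
Proof. by apply/matrixP => a b; rewrite !mxE rmorph_nat eq_sym. Qed.

Lemma mxtrace_eq1_dim_gt0 (R : nzRingType) m (A : 'M[R]_m) : \tr A = 1 -> (0 < m)%N.
Proof. by case: m A => // A; rewrite /mxtrace big_ord0 => /esym/eqP; rewrite oner_eq0. Qed.

Lemma unitmx_eigenvalue_neq0 (F : fieldType) m (A : 'M[F]_m) :
  (forall a, eigenvalue A a -> a != 0) -> A \in unitmx.
Proof.
move=> eig_neq0; have : ~~ eigenvalue A 0 by apply/negP => /eig_neq0; rewrite eqxx.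
by rewrite /eigenvalue /eigenspace negbK kermx_eq0 row_free_unit raddf0 subr0.
Qed.

End Matrices.

Section Tensor.
Variables (C : numClosedFieldType) (n d : nat).
Local Notation op := (op C n d).
Local Notation cfg := (cfg n d).
Implicit Types (S T U : {set 'I_n}) (A B H : op) (s t : cfg) (i j a b : 'I_n).
Implicit Types (F G : 'I_n -> 'M[C]_d) (X Y L : 'M[C]_d).

Lemma entE (f : cfg -> cfg -> C) s t : ent (mkop f) s t = f s t.
Proof. by rewrite /ent /mkop mxE !enum_rankK. Qed.

Lemma op_ext A B : (forall s t, ent A s t = ent B s t) -> A = B.
Proof.
move=> eqAB; apply/matrixP => p q; have := eqAB (enum_val p) (enum_val q).
by rewrite /ent !enum_valK.
Qed.

Lemma ent_mul A B s t : ent (A *m B) s t = \sum_u ent A s u * ent B u t.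
Proof.
rewrite /ent mxE (reindex (@enum_rank cfg)) //.
by exists enum_val => x _; [exact: enum_rankK | exact: enum_valK].
Qed.

Lemma ent_tr A : \tr A = \sum_u ent A u u.
Proof.
rewrite /mxtrace (reindex (@enum_rank cfg)) //.
by exists enum_val => x _; [exact: enum_rankK | exact: enum_valK].
Qed.

Lemma ent_scalar c s t : ent (c%:M : op) s t = c * (s == t)%:R.
Proof. by rewrite /ent mxE (inj_eq enum_rank_inj) mulr_natr. Qed.

Lemma entD A B s t : ent (A + B) s t = ent A s t + ent B s t.
Proof. by rewrite /ent mxE. Qed.

Lemma entZ c A s t : ent (c *: A) s t = c * ent A s t.
Proof. by rewrite /ent mxE. Qed.

Lemma ent_sum I (r : seq I) (P : pred I) (E : I -> op) s t :
  ent (\sum_(i <- r | P i) E i) s t = \sum_(i <- r | P i) ent (E i) s t.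
Proof. by rewrite /ent summxE. Qed.

Lemma ent_adj A s t : ent (adj A) s t = (ent A t s)^*.
Proof. by rewrite /ent /adj !mxE. Qed.

Lemma prod_nat_forall (P : pred 'I_n) (p : 'I_n -> bool) :
  \prod_(k | P k) ((p k)%:R : C) = [forall k, P k ==> p k]%:R.
Proof.
case: (boolP [forall k, _]) => [/forallP allp | /forallPn [k]].
  by rewrite big1 // => k Pk; have := allp k; rewrite Pk => /= ->.
by rewrite negb_imply => /andP [Pk /negbTE pk]; rewrite (bigD1 k) //= pk mul0r.
Qed.

Lemma prod_if_notin T (x : C) : \prod_k (if k \in T then 1 else x) = x ^+ #|~: T|.
Proof.
rewrite -prodr_const [RHS]big_mkcond; apply: eq_bigr => k _.
by rewrite inE; case: (k \in T).
Qed.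

Definition tensor F : op := mkop (fun s t => \prod_k F k (s k) (t k)).

Definition tpow_at (rho : 'M[C]_d) i Y : op := tensor (fun k => if k == i then Y else rho).

Lemma tpowE rho : tpow n rho = tensor (fun _ => rho).
Proof. by []. Qed.

Lemma ent_tensor F s t : ent (tensor F) s t = \prod_k F k (s k) (t k).
Proof. exact: entE. Qed.

Lemma eq_tensor F G : F =1 G -> tensor F = tensor G.
Proof.
by move=> eqFG; apply: op_ext => s t; rewrite !ent_tensor; under eq_bigr do rewrite eqFG.
Qed.

Lemma tensor_mul F G : tensor F *m tensor G = tensor (fun k => F k *m G k).
Proof.
apply: op_ext => s t; rewrite ent_mul ent_tensor.
under [LHS]eq_bigr do rewrite !ent_tensor -big_split /=.
under [RHS]eq_bigr do rewrite mxE.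
by rewrite bigA_distr_bigA.
Qed.

Lemma tensor1 : tensor (fun _ => 1%:M) = 1%:M.
Proof.
apply: op_ext => s t; rewrite ent_tensor ent_scalar mul1r.
under eq_bigr do rewrite mxE.
rewrite prod_nat_forall; congr (nat_of_bool _)%:R.
apply/forallP/eqP => [eq_st | -> k]; last by rewrite /= eqxx.
by apply/ffunP => k; apply/eqP/eq_st.
Qed.

Lemma tensor_mul_eq1 F G : (forall k, F k *m G k = 1%:M) -> tensor F *m tensor G = 1%:M.
Proof. by move=> FG1; rewrite tensor_mul -tensor1; apply: eq_tensor. Qed.

Lemma tensor_scalar_at i c : tensor (fun k => if k == i then c%:M else 1%:M) = c%:M.
Proof.
rewrite -[RHS]scalemx1 -tensor1.
apply: op_ext => s t; rewrite entZ !ent_tensor (bigD1 i) //= eqxx.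
rewrite [in RHS](bigD1 i) //= mulrA; congr (_ * _); first by rewrite !mxE mulr_natr.
by apply: eq_bigr => k /negbTE ->.
Qed.

Lemma adj_tensor F : adj (tensor F) = tensor (fun k => adj (F k)).
Proof.
apply: op_ext => s t; rewrite ent_adj !ent_tensor rmorph_prod.
by apply: eq_bigr => k _; rewrite !mxE.
Qed.

Lemma ent_tensor_delta (s t s' t' : cfg) :
  ent (tensor (fun k => delta_mx (s k) (t k))) s' t' = ((s' == s) && (t' == t))%:R.
Proof.
rewrite ent_tensor; under eq_bigr do rewrite mxE.
rewrite prod_nat_forall; congr (nat_of_bool _)%:R.
apply/forallP/andP => [eq_st | [/eqP-> /eqP->] k]; last by rewrite /= !eqxx.
by split; apply/eqP/ffunP => k; have /andP [/eqP ? /eqP ?] := eq_st k.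
Qed.

Lemma tensor_expansion A :
  A = \sum_s \sum_t ent A s t *: tensor (fun k => delta_mx (s k) (t k)).
Proof.
apply: op_ext => s0 t0; rewrite ent_sum; under eq_bigr do rewrite ent_sum.
under eq_bigr do under eq_bigr do rewrite entZ ent_tensor_delta.
rewrite (bigD1 s0) //= addrC big1 ?add0r => [|s /negbTE s_neq]; last first.
  by rewrite big1 // => t _; rewrite eq_sym s_neq mulr0.
rewrite (bigD1 t0) //= addrC big1 ?add0r => [|t /negbTE t_neq].
  by rewrite !eqxx mulr1.
by rewrite eq_sym t_neq andbF mulr0.
Qed.

Lemma linear_tensor_ext (V : lmodType C) (f g : {linear op -> V}) :
  (forall F, f (tensor F) = g (tensor F)) -> f =1 g.
Proof.
move=> eq_fg A; rewrite (tensor_expansion A) !linear_sum; apply: eq_bigr => s _.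
by rewrite !linear_sum; apply: eq_bigr => t _; rewrite !linearZ eq_fg.
Qed.

Lemma avg_is_linear T : linear (@avg C n d T).
Proof.
move=> c A B; apply: op_ext => s t; rewrite entD entZ !entE.
case: ifP => _; last by rewrite mulr0 addr0.
under eq_bigr do rewrite entD entZ.
by rewrite big_split /= -mulr_sumr mulrDr mulrCA.
Qed.
HB.instance Definition _ T := GRing.isLinear.Build C op op _ (avg T) (avg_is_linear T).

Lemma embed1_is_linear i : linear (@embed1 C n d i).
Proof.
move=> c X Y; apply: op_ext => s t; rewrite entD entZ !entE.
by case: ifP => _; rewrite ?mxE // mulr0 addr0.
Qed.
HB.instance Definition _ i :=
  GRing.isLinear.Build C 'M[C]_d op _ (embed1 i) (embed1_is_linear i).

Lemma avg_tensor T F : avg T (tensor F) =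
  tensor (fun k => if k \in T then F k else (d%:R^-1 * \tr (F k))%:M).
Proof.
apply: op_ext => s t; rewrite entE ent_tensor.
pose G k (b : 'I_d) := if k \in T then (b == s k)%:R * F k (s k) (t k) else F k b b.
pose W k := if k \in T then F k (s k) (t k) else \tr (F k).
have sum_glue : \sum_(z | agree_on T z s) ent (tensor F) z (glue T t z) = \prod_k W k.
  transitivity (\sum_(z : cfg) \prod_k G k (z k)).
    rewrite big_mkcond; apply: eq_bigr => z _; case: ifP => [zs | /negbT].
      rewrite ent_tensor; apply: eq_bigr => k _; rewrite /G /glue ffunE.
      case: ifP => // kT; have /eqP-> := implyP (forallP zs k) kT.
      by rewrite eqxx mul1r.
    case/forallPn => k; rewrite negb_imply => /andP [kT /negbTE zk].
    by rewrite (bigD1 k) //= /G kT zk !mul0r.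
  rewrite -bigA_distr_bigA; apply: eq_bigr => k _; rewrite /G /W; case: ifP => // _.
  rewrite (bigD1 (s k)) //= eqxx mul1r big1 ?addr0 // => b /negbTE ->.
  by rewrite mul0r.
rewrite sum_glue [RHS](eq_bigr (fun k => ((k \notin T) ==> (s k == t k))%:R *
   ((if k \in T then 1 else d%:R^-1) * W k))) => [|k _]; last first.
  by rewrite /W; case: (k \in T); rewrite /= ?mul1r ?mxE // mulr_natl.
rewrite !big_split /= prod_nat_forall prod_if_notin exprVn.
rewrite -[agree_off T s t]/[forall k, true ==> ((k \notin T) ==> (s k == t k))].
by case: ifP; rewrite ?mul1r ?mul0r.
Qed.

Lemma embed1_tensor i X : embed1 i X = tensor (fun k => if k == i then X else 1%:M).
Proof.
apply: op_ext => s t; rewrite entE ent_tensor (bigD1 i) //= eqxx.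
rewrite (eq_bigr (fun k => (s k == t k)%:R)) => [|k /negbTE ->]; last by rewrite mxE.
rewrite prod_nat_forall.
have -> : agree_off [set i] s t = [forall k, (k != i) ==> (s k == t k)].
  by apply: eq_forallb => k; rewrite in_set1.
by case: ifP; rewrite ?mulr1 ?mulr0.
Qed.

Lemma embed1_scalar i c : embed1 i c%:M = c%:M :> op.
Proof.
rewrite embed1_tensor -(tensor_scalar_at i); apply: eq_tensor => k.
by case: (k == i).
Qed.

Lemma embed1_mul i X Y : embed1 i X *m embed1 i Y = embed1 i (X *m Y).
Proof.
rewrite !embed1_tensor tensor_mul; apply: eq_tensor => k.
by case: (k == i); rewrite ?mulmx1.
Qed.

Lemma embed1_pair i j X : i != j ->
  embed1 i X *m embed1 j X = tensor (fun k => if k \in [set i; j] then X else 1%:M).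
Proof.
move=> neq_ij; rewrite !embed1_tensor tensor_mul; apply: eq_tensor => k; rewrite !inE.
case: (k =P i) => [-> | _]; first by rewrite (negbTE neq_ij) mulmx1.
by case: (k == j); rewrite ?mul1mx ?mulmx1.
Qed.

Lemma adj_embed1 i X : adj (embed1 i X) = embed1 i (adj X).
Proof.
rewrite !embed1_tensor adj_tensor; apply: eq_tensor => k.
by case: (k == i); rewrite ?adj1.
Qed.

Lemma ent_embed1_upd i X s (a b : 'I_d) : ent (embed1 i X) (upd s i a) (upd s i b) = X a b.
Proof.
rewrite entE !ffunE !eqxx; case: ifP => // /negbT/forallPn [k].
by rewrite in_set1 !ffunE; case: eqP; rewrite //= eqxx.
Qed.

Lemma embed1_inj i : injective (@embed1 C n d i).
Proof.
move=> X Y eqXY; apply/matrixP => a b.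
by rewrite -(ent_embed1_upd i X [ffun=> a]) eqXY ent_embed1_upd.
Qed.

Lemma avg_commute U A F : (forall k, k \in U -> F k = 1%:M) ->
  avg U A *m tensor F = tensor F *m avg U A.
Proof.
move=> F1; move: A.
apply: (linear_tensor_ext (f := mulmxr (tensor F) \o avg U) (g := mulmx (tensor F) \o avg U)).
move=> G /=; rewrite avg_tensor !tensor_mul; apply: eq_tensor => k.
by case: ifP => kU; [rewrite F1 // mulmx1 mul1mx | rewrite scalar_mxC].
Qed.

Lemma avg_set0 A : avg set0 A = (d%:R ^- n * \tr A)%:M.
Proof.
apply: op_ext => s t; rewrite entE ent_scalar.
have -> : agree_off set0 s t = (s == t).
  apply/forallP/eqP => [eq_st | -> k]; last by rewrite eqxx implybT.
  by apply/ffunP => k; have := eq_st k; rewrite inE => /eqP.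
case: (s =P t) => [<- | _]; last by rewrite mulr0.
rewrite setC0 cardsT card_ord mulr1 ent_tr; congr (_ * _).
apply: eq_big => [z | z _]; first by apply/forallP => k; rewrite inE.
suff -> : glue set0 s z = z by [].
by apply/ffunP => k; rewrite !ffunE inE.
Qed.

Lemma embed1_ptr1 i A : embed1 i (ptr1 i A) = avg [set i] A.
Proof.
apply: op_ext => s t; rewrite !entE; case: ifP => // _.
rewrite mxE cardsC1 card_ord; congr (_ * _); apply: eq_big => [z | z _].
  apply/eqP/forallP => [eq_zs k | /(_ i)]; last by rewrite in_set1 eqxx => /eqP.
  by apply/implyP; rewrite in_set1 => /eqP->; apply/eqP.
suff -> : upd z i (t i) = glue [set i] t z by [].
by apply/ffunP => k; rewrite !ffunE in_set1; case: eqP => [-> |].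
Qed.

Lemma embed1_Hsite H i : embed1 i (Hsite H i) = avg [set i] H - avg set0 H.
Proof. by rewrite linearB /= embed1_ptr1 embed1_scalar avg_set0. Qed.

Lemma mxtrace_Lsite H Lops i rho : \tr (Lsite H Lops i rho) = 0.
Proof.
rewrite /Lsite mxtraceD raddfN /= mxtraceZ mxtrace_comm mulr0 oppr0 add0r.
by rewrite raddf_sum big1 // => L _; exact: mxtrace_dissip.
Qed.

Lemma Hpair_sym H i j : Hpair H i j = Hpair H j i.
Proof. by rewrite /Hpair setUC (addrAC (avg _ H)). Qed.

Lemma Hpair_is_linear i j : linear (fun A => Hpair A i j).
Proof. exact: linearP (avg [set i; j] \- avg [set i] \- avg [set j] \+ avg set0). Qed.

Lemma Hpair_commute H i j F : (forall k, k \in [set i; j] -> F k = 1%:M) ->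
  Hpair H i j *m tensor F = tensor F *m Hpair H i j.
Proof.
move=> F1; have avgF U : U \subset [set i; j] -> avg U H *m tensor F = tensor F *m avg U H.
  by move=> Uij; apply: avg_commute => k /(subsetP Uij)/F1.
rewrite /Hpair !mulmxDl !mulmxDr !mulNmx !mulmxN !avgF ?sub0set //.
  by rewrite sub1set !inE eqxx orbT.
by rewrite sub1set !inE eqxx.
Qed.

Lemma site_part_is_linear i : linear (fun A => avg [set i] A - avg set0 A).
Proof. exact: linearP (avg [set i] \- avg set0). Qed.

(* The right-hand side of H = sum_{i<j} H_ij + sum_i H_i + d^-n Tr H, by embed1_Hsite and
   avg_set0. *)
Definition local_parts A : op :=
  \sum_(i : 'I_n) \sum_(j : 'I_n | (i < j)%N) Hpair A i j +
  \sum_(i : 'I_n) (avg [set i] A - avg set0 A) + avg set0 A.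

Lemma local_parts_is_linear : linear local_parts.
Proof.
move=> c A B; rewrite /local_parts.
under eq_bigr do under eq_bigr do rewrite Hpair_is_linear.
under [X in _ + X + _]eq_bigr do rewrite site_part_is_linear.
under eq_bigr do rewrite big_split.
rewrite big_split [X in _ + X + _]big_split linearP /=.
under [X in X + _ + _ + _]eq_bigr do rewrite -scaler_sumr.
by rewrite -!scaler_sumr [X in X + _ = _]addrACA [LHS]addrACA !scalerDr.
Qed.
HB.instance Definition _ := GRing.isLinear.Build C op op _ local_parts local_parts_is_linear.

Section ProductState.
Variable rho : 'M[C]_d.
Local Notation R := (tensor (fun _ : 'I_n => rho)).

Lemma tpow_atE i Y :
  tpow_at rho i Y = embed1 i Y *m tensor (fun k => if k == i then 1%:M else rho).
Proof.
rewrite embed1_tensor tensor_mul; apply: eq_tensor => k.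
by case: (k == i); rewrite ?mulmx1 ?mul1mx.
Qed.

Lemma tpow_at_is_linear i : linear (tpow_at rho i).
Proof. by move=> c X Y; rewrite !tpow_atE linearP mulmxDl scalemxAl. Qed.
HB.instance Definition _ i :=
  GRing.isLinear.Build C 'M[C]_d op _ (tpow_at rho i) (tpow_at_is_linear i).

Lemma embed1_mul_tpow i X : embed1 i X *m R = tpow_at rho i (X *m rho).
Proof.
rewrite embed1_tensor tensor_mul; apply: eq_tensor => k.
by case: (k == i); rewrite ?mul1mx.
Qed.

Lemma tpow_mul_embed1 i X : R *m embed1 i X = tpow_at rho i (rho *m X).
Proof.
rewrite embed1_tensor tensor_mul; apply: eq_tensor => k.
by case: (k == i); rewrite ?mulmx1.
Qed.

Lemma tpow_at_mul_embed1 i Y X : tpow_at rho i Y *m embed1 i X = tpow_at rho i (Y *m X).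
Proof.
rewrite embed1_tensor tensor_mul; apply: eq_tensor => k.
by case: (k == i); rewrite ?mulmx1.
Qed.

Lemma comm_embed1_tpow i X : comm (embed1 i X) R = tpow_at rho i (comm X rho).
Proof. by rewrite /comm embed1_mul_tpow tpow_mul_embed1 linearB. Qed.

Lemma dissip_embed1_tpow i L : dissip (embed1 i L) R = tpow_at rho i (dissip L rho).
Proof.
rewrite /dissip adj_embed1 embed1_mul_tpow tpow_at_mul_embed1 !embed1_mul.
by rewrite embed1_mul_tpow tpow_mul_embed1 [RHS]linearB /= [in RHS]linearZ /= [in RHS]linearD.
Qed.

Lemma comm_Hpair_tpow H i j : i != j ->
  comm (Hpair H i j) R =
  comm (Hpair H i j) (embed1 i rho *m embed1 j rho) *m
    tensor (fun k => if k \in [set i; j] then 1%:M else rho).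
Proof.
move=> neq_ij; set Q := tensor (fun k => if k \in _ then _ else _).
have -> : R = embed1 i rho *m embed1 j rho *m Q.
  rewrite embed1_pair // tensor_mul; apply: eq_tensor => k.
  by case: (k \in [set i; j]); rewrite ?mulmx1 ?mul1mx.
rewrite /comm mulmxBl !mulmxA -[_ *m Q *m _]mulmxA -Hpair_commute ?mulmxA // => k.
by rewrite /Q => ->.
Qed.

End ProductState.

Section PositiveDimension.
Hypothesis d_gt0 : (0 < d)%N.

Lemma normalized_trace_scalar c : d%:R^-1 * \tr (c%:M : 'M[C]_d) = c.
Proof. by rewrite mxtrace_scalar -[c *+ d]mulr_natl mulKf // pnatr_eq0 -lt0n. Qed.

Lemma avg_avg T U A : avg T (avg U A) = avg (T :&: U) A.
Proof.
move: A; apply: (linear_tensor_ext (f := avg T \o avg U) (g := avg (T :&: U))).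
move=> F /=; rewrite !avg_tensor; apply: eq_tensor => k; rewrite inE.
by case: (k \in T); case: (k \in U); rewrite //= normalized_trace_scalar.
Qed.

Lemma avg_embed1 T i X : avg T (embed1 i X) =
  if i \in T then embed1 i X else (d%:R^-1 * \tr X)%:M :> op.
Proof.
rewrite embed1_tensor avg_tensor; case: ifP => iT; last rewrite -(tensor_scalar_at i).
all: apply: eq_tensor => k; case: (k =P i) => [-> | _]; rewrite ?iT //.
all: by case: (k \in T); rewrite ?normalized_trace_scalar.
Qed.

Lemma avg_conj T (rho sig : 'M[C]_d) A : sig *m rho = 1%:M ->
  avg T (tensor (fun _ => rho) *m A *m tensor (fun _ => sig)) =
  tensor (fun k => if k \in T then rho else 1%:M) *m avg T A *m
  tensor (fun k => if k \in T then sig else 1%:M).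
Proof.
move=> sig_rho; move: A.
apply: (linear_tensor_ext
  (f := avg T \o mulmxr (tensor (fun _ => sig)) \o mulmx (tensor (fun _ => rho)))
  (g := mulmxr (tensor (fun k => if k \in T then sig else 1%:M)) \o
        mulmx (tensor (fun k => if k \in T then rho else 1%:M)) \o avg T)).
move=> F /=; rewrite !tensor_mul !avg_tensor !tensor_mul; apply: eq_tensor => k.
by case: ifP => // _; rewrite mul1mx mulmx1 mxtrace_mulC mulmxA sig_rho mul1mx.
Qed.

Lemma card_agree_on S s : \sum_(z | agree_on S z s) (1 : C) = d%:R ^+ #|~: S|.
Proof.
transitivity (\sum_(z : cfg) \prod_k (if k \in S then ((z k == s k)%:R : C) else 1)).
  rewrite big_mkcond; apply: eq_bigr => z _.
  rewrite (eq_bigr (fun k => ((k \in S) ==> (z k == s k))%:R)) => [|k _]; last first.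
    by case: (k \in S).
  rewrite prod_nat_forall -[agree_on S z s]/[forall k, true ==> ((k \in S) ==> (z k == s k))].
  by case: ifP.
rewrite -(bigA_distr_bigA (fun k (b : 'I_d) => if k \in S then ((b == s k)%:R : C) else 1)).
rewrite /= -prod_if_notin; apply: eq_bigr => k _; case: (k \in S).
  by rewrite (bigD1 (s k)) //= eqxx big1 ?addr0 // => b /negbTE ->.
by rewrite sumr_const card_ord.
Qed.

Lemma avg_supported S A : supported_on S A -> avg S A = A.
Proof.
case=> A_off A_on; apply: op_ext => s t; rewrite entE; case: ifP => [st | /negbT st].
  rewrite (eq_bigr (fun _ => 1 * ent A s t)) => [|z zs]; last first.
    rewrite mul1r; apply: A_on => //; apply/forallP => k; apply/implyP => kS.
      by rewrite /glue ffunE kS.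
    by rewrite /glue ffunE (negbTE kS).
  by rewrite -mulr_suml card_agree_on mulKf // expf_neq0 // pnatr_eq0 -lt0n.
by rewrite A_off.
Qed.

Lemma avg_Hpair_notin T H i j : ~~ ([set i; j] \subset T) -> avg T (Hpair H i j) = 0.
Proof.
have vanish k l : k \notin T -> avg T (Hpair H k l) = 0.
  move=> kT; rewrite /Hpair !linearD !linearN /= !avg_avg !(setIC T) setIUl.
  by rewrite setI1_notin // set0U set0I addrAC subrK subrr.
rewrite subUset !sub1set negb_and => /orP [iT | jT]; first exact: vanish.
by rewrite Hpair_sym vanish.
Qed.

Lemma avg_Hpair_subset T H i j : [set i; j] \subset T -> avg T (Hpair H i j) = Hpair H i j.
Proof.
move=> ijT; have subT U : U \subset [set i; j] -> T :&: U = U.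
  by move=> Uij; apply/setIidPr/(subset_trans Uij).
rewrite /Hpair !linearD !linearN /= !avg_avg !subT ?sub0set //.
  by rewrite sub1set !inE eqxx orbT.
by rewrite sub1set !inE eqxx.
Qed.

Lemma Hpair_avg S H i j : Hpair (avg S H) i j = avg S (Hpair H i j).
Proof. by rewrite /Hpair !linearD !linearN /= !avg_avg !(setIC S). Qed.

Lemma local_parts_avg S A : (#|S| <= 2)%N -> local_parts (avg S A) = avg S A.
Proof.
move=> S_le2.
have pair0 i j : ~~ ([set i; j] \subset S) -> Hpair (avg S A) i j = 0.
  by move=> ijS; rewrite Hpair_avg avg_Hpair_notin.
have site0 i : i \notin S -> avg [set i] (avg S A) - avg set0 A = 0.
  by move=> iS; rewrite avg_avg setI1_notin // subrr.
rewrite /local_parts [avg set0 _]avg_avg set0I.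
case/card_le2P: S_le2 => [? | [a ?] | [a [b [lt_ab ?]]]]; subst S.
- rewrite big1 ?add0r => [|i _]; last first.
    by apply: big1 => j _; rewrite pair0 // subUset !sub1set !inE.
  by rewrite big1 ?add0r // => i _; rewrite site0 // inE.
- rewrite big1 ?add0r => [|i _]; last by apply: big1 => j lt_ij; rewrite pair0 ?pair_not_subset1.
  rewrite (bigD1 a) //= big1 ?addr0 => [|i /negbTE neq_ia]; last first.
    by rewrite site0 // in_set1 neq_ia.
  by rewrite avg_avg setIid subrK.
- rewrite (sum_pairs_single lt_ab) => [|i j _ ijS]; last by rewrite pair0.
  rewrite (bigD1 a) //= (bigD1 b) /=; last by rewrite neq_ltn lt_ab orbT.
  rewrite big1 ?addr0 => [|i /andP [neq_ia neq_ib]]; last first.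
    by rewrite site0 // !inE negb_or neq_ia neq_ib.
  rewrite Hpair_avg avg_Hpair_subset // !avg_avg (setIidPl (subsetUl _ _)).
  rewrite (setIidPl (subsetUr _ _)) /Hpair.
  by apply/matrixP => p q; rewrite !mxE; ring.
Qed.

Lemma two_local_decomposition H : two_local H -> local_parts H = H.
Proof.
case=> As [-> As_local]; rewrite linear_sum; apply: eq_big_seq => A.
by case/As_local => S [S_le2 A_S]; rewrite /= -(avg_supported A_S) local_parts_avg.
Qed.

Lemma Lind_tensor H Lops rho : two_local H ->
  Lind H Lops (tensor (fun _ => rho)) =
  - 'i *: \sum_(i : 'I_n) \sum_(j : 'I_n | (i < j)%N) comm (Hpair H i j) (tensor (fun _ => rho)) +
  \sum_i tpow_at rho i (Lsite H Lops i rho).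
Proof.
move=> H2; set R := tensor _.
rewrite /Lind -{1}(two_local_decomposition H2) /local_parts.
rewrite -(eq_bigr _ (fun i _ => embed1_Hsite H i)) avg_set0 !commDl comm_scalar addr0.
rewrite !comm_suml scalerDr opprD -addrA scaleNr; congr (_ + _).
  by congr (- (_ *: _)); apply: eq_bigr => i _; rewrite comm_suml.
under eq_bigr do rewrite comm_embed1_tpow.
under [in RHS]eq_bigr do rewrite /Lsite linearD linearN linearZ linear_sum /=.
rewrite big_split /= sumrN -scaler_sumr; congr (- _ + _).
by apply: eq_bigr => i _; apply: eq_bigr => L _; rewrite dissip_embed1_tpow.
Qed.

Lemma Lind_tensor_eq0 H Lops rho : two_local H ->
  (forall i, Lsite H Lops i rho = 0) ->
  (forall i j, (i < j)%N -> comm (Hpair H i j) (embed1 i rho *m embed1 j rho) = 0) ->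
  Lind H Lops (tensor (fun _ => rho)) = 0.
Proof.
move=> H2 Lsite0 pair0; rewrite Lind_tensor // big1 ?scaler0 ?add0r => [|i _].
  by apply: big1 => i _; rewrite Lsite0 linear0.
by apply: big1 => j lt_ij; rewrite comm_Hpair_tpow ?pair0 ?mul0mx // neq_ltn lt_ij.
Qed.

Section FullRank.
Variable rho : 'M[C]_d.
Hypothesis rho_unit : rho \in unitmx.
Local Notation sig := (invmx rho).
Local Notation R := (tensor (fun _ : 'I_n => rho)).
Local Notation Rinv := (tensor (fun _ : 'I_n => sig)).
Local Notation on T Y := (tensor (fun k => if k \in T then Y else 1%:M)).

Lemma tpow_at_mul_inv i Y : tpow_at rho i Y *m Rinv = embed1 i (Y *m sig).
Proof.
rewrite embed1_tensor tensor_mul; apply: eq_tensor => k.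
by case: (k == i); rewrite ?mulmxV.
Qed.

Lemma avg_comm_tensor_inv T A :
  avg T (comm A R *m Rinv) = avg T A - on T rho *m avg T A *m on T sig.
Proof.
rewrite /comm mulmxBl -[A *m R *m Rinv]mulmxA tensor_mul_eq1 => [|k]; last exact: mulmxV.
by rewrite mulmx1 linearB /= avg_conj // mulVmx.
Qed.

Lemma avg_Lind_tensor_inv H Lops T : two_local H ->
  avg T (Lind H Lops R *m Rinv) =
  - 'i *: \sum_(i : 'I_n) \sum_(j : 'I_n | (i < j)%N)
      (avg T (Hpair H i j) - on T rho *m avg T (Hpair H i j) *m on T sig) +
  \sum_i avg T (embed1 i (Lsite H Lops i rho *m sig)).
Proof.
move=> H2; rewrite Lind_tensor // mulmxDl linearD /= -scalemxAl linearZ /=.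
congr (_ *: _ + _); rewrite mulmx_suml linear_sum; apply: eq_bigr => i _ /=.
  by rewrite mulmx_suml linear_sum; apply: eq_bigr => j _ /=; rewrite avg_comm_tensor_inv.
by rewrite tpow_at_mul_inv.
Qed.

Lemma Lsite_eq0_of_Lind H Lops : two_local H -> \tr rho = 1 ->
  Lind H Lops R = 0 -> forall a, Lsite H Lops a rho = 0.
Proof.
move=> H2 tr1 L0 a; have := avg_Lind_tensor_inv Lops [set a] H2.
rewrite L0 mul0mx linear0 big1 ?scaler0 ?add0r => [|i _]; last first.
  apply: big1 => j lt_ij.
  by rewrite avg_Hpair_notin ?pair_not_subset1 ?mulmx0 ?mul0mx ?subrr.
rewrite (bigD1 a) //= avg_embed1 in_set1 eqxx.
under eq_bigr => i neq_ia do rewrite avg_embed1 in_set1 (negbTE neq_ia).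
rewrite -(raddf_sum (@scalar_mx C #|{: cfg}|)) -[X in _ + X](embed1_scalar a).
rewrite -linearD -(linear0 (embed1 a)) => /embed1_inj /esym /(congr1 (mulmx^~ rho)).
rewrite mulmxDl -mulmxA mulVmx // mulmx1 mul0mx mul_scalar_mx => /eqP.
rewrite addr_eq0 => /eqP La; have := mxtrace_Lsite H Lops a rho.
rewrite La raddfN /= mxtraceZ tr1 mulr1 => /eqP; rewrite oppr_eq0 => /eqP ->.
by rewrite scale0r oppr0.
Qed.

Lemma comm_Hpair_eq0_of_Lind H Lops : two_local H -> Lind H Lops R = 0 ->
  (forall i, Lsite H Lops i rho = 0) ->
  forall a b, (a < b)%N -> comm (Hpair H a b) (embed1 a rho *m embed1 b rho) = 0.
Proof.
move=> H2 L0 Lsite0 a b lt_ab; have := avg_Lind_tensor_inv Lops [set a; b] H2.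
rewrite L0 mul0mx linear0 (sum_pairs_single lt_ab) => [|i j _ ijS]; last first.
  by rewrite avg_Hpair_notin ?mulmx0 ?mul0mx ?subrr.
rewrite big1 ?addr0 => [|i _]; last by rewrite Lsite0 mul0mx !linear0.
rewrite avg_Hpair_subset // => /esym/eqP.
rewrite scaler_eq0 oppr_eq0 (negbTE (neq0Ci C)) subr_eq0 => /eqP HP.
rewrite embed1_pair ?neq_ltn ?lt_ab // /comm {1}HP -!mulmxA tensor_mul_eq1 ?mulmx1 ?subrr //.
by move=> k; case: ifP; rewrite ?mulVmx ?mulmx1.
Qed.

End FullRank.
End PositiveDimension.
End Tensor.

Theorem lemma2 (C : numClosedFieldType) (n d : nat) (H : op C n d)
  (Hherm : adj H = H) (H2 : two_local H)
  (Lops : 'I_n -> seq 'M[C]_d) (rho : 'M[C]_d) (Hrho : density rho) :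
  let iii' := forall i : 'I_n, Lsite H Lops i rho = 0 in
  let iv' := forall i j : 'I_n, (i < j)%N ->
      comm (Hpair H i j) (embed1 i rho *m embed1 j rho) = 0 in
  ((forall a : C, eigenvalue rho a -> a != 0) ->
     (Lind H Lops (tpow n rho) = 0 <-> (iii' /\ iv'))) /\
  (iii' -> iv' -> Lind H Lops (tpow n rho) = 0).
Proof.
move=> iii' iv'; rewrite {}/iii' {}/iv'; have [_ [_ tr1]] := Hrho.
have d_gt0 := mxtrace_eq1_dim_gt0 tr1.
have part_b := Lind_tensor_eq0 d_gt0 H2; rewrite tpowE.
split=> [eig_neq0 | ]; last exact: part_b.
have rho_unit := unitmx_eigenvalue_neq0 eig_neq0.
split=> [L0 | [Lsite0 pair0]]; last exact: part_b.
have Lsite0 := Lsite_eq0_of_Lind d_gt0 rho_unit H2 tr1 L0.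
by split; last exact (comm_Hpair_eq0_of_Lind d_gt0 rho_unit H2 L0 Lsite0).
Qed.
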